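(* Let $k\ge1$. Conditional on the attack cycle starting with SS, the probability that it ends with exactly $k$ consecutive letters H is $pq^{k-1}$.
   Context: Honest hashrate $p$, attacker hashrate $q$, $p+q=1$, $0<q<p$. The attack cycles starting with SS are the words $SSwH$ over $\{S,H\}$ with $w$ a Dyck word (S up-step, H down-step: equally many S and H, every prefix with at least as many S as H), with $\mathbb{P}[SSwH]=q^2p(pq)^{|w|}$ where $|w|$ is half the length of $w$. *)

From mathcomp Require Import all_boot all_order all_algebra.
From mathcomp Require Import all_classical all_reals all_analysis.
Set Implicit Arguments. Unset Strict Implicit. Unset Printing Implicit Defensive.
Import Order.TTheory GRing.Theory Num.Theory numFieldNormedType.Exports.
Local Open Scope ring_scope.

(* Words over {S,H} encoded as seq bool: true = S (up-step), false = H (down-step). *)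

Definition dyck (w : seq bool) : bool :=
  (count id w == count negb w)%N &&
  all (fun i => count negb (take i w) <= count id (take i w))%N (iota 0 (size w).+1).

Definition cycle_SS (w : seq bool) : seq bool := [:: true; true] ++ w ++ [:: false].

Definition trailH (c : seq bool) : nat := find id (rev c).

(* Total probability of the attack cycles S S w H (w Dyck word of half-length n)
   satisfying the event E; each has probability q^2 p (pq)^n. *)
Definition cyc_mass (R : realType) (p q : R) (E : seq bool -> bool) (n : nat) : R :=
  \sum_(w : (n.*2).-tuple bool | dyck w && E (cycle_SS w)) (q ^+ 2 * p * (p * q) ^+ n).

(* Probability of the event E (intersected with "cycle starts with SS"). *)
Definition prob_SS (R : realType) (p q : R) (E : seq bool -> bool) : R :=
  limn (series (cyc_mass p q E) : R^nat).

From mathcomp Require Import all_boot all_order all_algebra.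
From mathcomp Require Import all_classical all_reals all_analysis.
From mathcomp Require Import zify ring lra.

(* A nonempty Dyck word splits uniquely at its last return to height 0 as
   w = u S v H with u and v Dyck words, and the final H-run of w is one longer
   than that of v.  Weight the Dyck words of semilength n by (pq)^n and let C,
   resp. D_j, be the total weight of all of them, resp. of those whose final
   H-run has length at least j.  The decomposition gives C = 1 + pq C^2 and
   D_(j+1) = pq C D_j, as Cauchy products of nonnegative series.  The partial
   sums of C stay below 1/p, which selects the root C = 1/p of the quadratic
   (the other root is 1/q > 1/p), hence D_j = q^j / p.  The final H-run of
   S S w H is one longer than that of w, so the cycles ending with exactly
   k + 1 letters H have probability q^2 p (D_k - D_(k+1)) = p q^(k+2), while all
   cycles starting with SS have probability q^2 p C = q^2. *)

Set Implicit Arguments.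
Unset Strict Implicit.
Unset Printing Implicit Defensive.

Import Order.TTheory GRing.Theory Num.Theory numFieldNormedType.Exports.
Local Open Scope ring_scope.
Local Open Scope classical_set_scope.

Fixpoint height (h : nat) (s : seq bool) : option nat :=
  match s with
  | [::] => Some h
  | true :: s' => height h.+1 s'
  | false :: s' => if h is h'.+1 then height h' s' else None
  end.

Lemma height_cat h s t : height h (s ++ t) = obind (height^~ t) (height h s).
Proof. by elim: s h => [|[] s IH] h //=; case: h. Qed.

Lemma height_addn d h h' s : height h s = Some h' -> height (h + d) s = Some (h' + d).
Proof.
elim: s h h' => [|[] s IH] h h' /=; first by case=> ->.
  by move/IH; rewrite addSn.
by case: h => [//|h] /= /IH.
Qed.

Definition nonneg_from h s : bool :=
  all (fun i => count negb (take i s) <= h + count id (take i s))%N (iota 0 (size s).+1).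

Lemma nonneg_from_cons h b s : nonneg_from h (b :: s) =
  if b then nonneg_from h.+1 s else (0 < h)%N && nonneg_from h.-1 s.
Proof.
rewrite /nonneg_from [iota 0 _](_ : _ = [:: 0%N] ++ iota 1 (size s).+1) //.
rewrite all_cat [all _ [:: _]]/= andTb (iotaDl 1 0) all_map.
case: b; last case: h => [|h].
- by apply: eq_all => i /=; rewrite !add0n addnS addSn.
- by rewrite /= !add0n take0.
- by apply: eq_all => i /=; rewrite !add0n add1n addSn ltnS.
Qed.

Lemma heightE h s : height h s =
  if nonneg_from h s then Some (h + count id s - count negb s)%N else None.
Proof.
elim: s h => [|[] s IH] h; rewrite ?nonneg_from_cons /=.
- by rewrite /nonneg_from /= addn0 subn0.
- by rewrite IH; congr (if _ then Some _ else _); lia.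
case: h => [//|h] /=; rewrite IH; congr (if _ then Some _ else _); lia.
Qed.

Lemma dyckE w : dyck w = (height 0 w == Some 0%N).
Proof.
have -> : dyck w = (count id w == count negb w) && nonneg_from 0 w.
  by congr (_ && _); apply: eq_all => i; rewrite add0n.
rewrite heightE; case: ifP => [nonneg|]; last by rewrite andbF.
have : (count negb w <= count id w)%N.
  by move/allP: nonneg => /(_ (size w)); rewrite mem_iota take_size !add0n ltnSn; apply.
by rewrite andbT => le; apply/eqP/eqP => [->|[]]; [rewrite subnn|lia].
Qed.

Lemma height_last_up s h : height 0 s = Some h.+1 ->
  exists u r, [/\ s = u ++ true :: r, height 0 u = Some 0%N & height 0 r = Some h].
Proof.
elim/last_ind: s h => [//|s b IH] h.
rewrite -cats1 height_cat; case hs: (height 0 s) => [m|//] /=.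
case: b => /=; first move=> [<-].
  case: m hs => [|m] hs; first by exists s, [::].
  have [u [r [-> hu hr]]] := IH _ hs.
  by exists u, (r ++ [:: true]); rewrite -catA height_cat hr.
case: m hs => [//|m] hs [em]; subst m.
have [u [r [-> hu hr]]] := IH _ hs.
by exists u, (r ++ [:: false]); rewrite -catA height_cat hr.
Qed.

Definition glue u v : seq bool := u ++ true :: v ++ [:: false].

Lemma dyck_glue u v : dyck u -> dyck v -> dyck (glue u v).
Proof.
rewrite !dyckE => /eqP hu /eqP hv.
by rewrite height_cat hu /= height_cat (height_addn 1 hv).
Qed.

Lemma dyck_last_return w : dyck w -> w != [::] ->
  exists u v, [/\ w = glue u v, dyck u & dyck v].
Proof.
rewrite dyckE; case/lastP: w => [//|w b] /eqP + _.
rewrite -cats1 height_cat; case hw: (height 0 w) => [[|m]|] //=; case: b => //= [[m0]].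
move: hw; rewrite m0 => /height_last_up [u [v [-> hu hv]]].
by exists u, v; rewrite /glue !dyckE hu hv -catA.
Qed.

Lemma glue_inj u v u' v' : dyck u -> dyck v -> dyck u' -> dyck v' ->
  glue u v = glue u' v' -> u = u' /\ v = v'.
Proof.
wlog le_uu' : u v u' v' / (size u <= size u')%N.
  move=> wlog_le du dv du' dv' e; case: (leqP (size u) (size u')) => [le|/ltnW le].
    exact: wlog_le.
  by have [-> ->] := wlog_le _ _ _ _ le du' dv' du dv (esym e).
move=> du dv du' _ e.
case: (ltnP (size u) (size u')) => [lt_uu'|ge_uu']; last first.
  have eq_uu' : size u = size u' by apply/eqP; rewrite eqn_leq le_uu'.
  move/eqP: e; rewrite /glue (eqseq_cat _ _ eq_uu') => /andP[/eqP -> /eqP[]].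
  by rewrite !cats1 => /rcons_inj [->].
(* Otherwise u' = u ++ true :: take d v ends at height at least 1. *)
pose d := (size u' - (size u).+1)%N.
have lt_dv : (d < size v)%N.
  by move: (congr1 size e); rewrite /glue !size_cat /= !size_cat /= /d; lia.
have eu' : u' = u ++ true :: take d v.
  have -> : u' = take (size u') (glue u' v') by rewrite /glue take_size_cat.
  rewrite -e /glue take_cat ltnNge (ltnW lt_uu') /= -(subnSK lt_uu') /=.
  by rewrite take_cat lt_dv.
have : height 0 (take d v) != None.
  move: dv; rewrite dyckE -{1}(cat_take_drop d v) height_cat.
  by case: (height 0 (take d v)).
case hd: (height 0 (take d v)) => [m|//] _.
move: du du'; rewrite eu' !dyckE height_cat => /eqP -> /=.
by rewrite (height_addn 1 hd) => /eqP []; lia.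
Qed.

Lemma trailH_glue u v : trailH (glue u v) = (trailH v).+1.
Proof.
rewrite /trailH /glue rev_cat rev_cons rev_cat /= -cats1 -catA find_cat /=.
by case: ifP => // /negbT /hasNfind ->; rewrite addn0.
Qed.

Lemma size_dyck w : dyck w -> size w = (count id w).*2.
Proof.
by case/andP => /eqP e _; rewrite -addnn {2}e -(count_predC id w).
Qed.

Definition words m : seq (seq bool) := map val (index_enum (m.-tuple bool)).

Lemma mem_words m s : (s \in words m) = (size s == m).
Proof.
apply/mapP/idP => [[t _ ->]|sm]; first by rewrite size_tuple.
by exists (Tuple sm); rewrite ?mem_index_enum.
Qed.

Lemma uniq_words m : uniq (words m).
Proof. by rewrite map_inj_uniq ?index_enum_uniq //; apply: val_inj. Qed.

Definition dyck_words n : seq (seq bool) := [seq w <- words n.*2 | dyck w].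

Lemma mem_dyck_words n w : (w \in dyck_words n) = (size w == n.*2) && dyck w.
Proof. by rewrite mem_filter mem_words andbC. Qed.

Lemma uniq_dyck_words n : uniq (dyck_words n).
Proof. exact/filter_uniq/uniq_words. Qed.

Lemma sum_dyck_tuples (V : nmodType) (P : pred (seq bool)) (c : V) n :
  \sum_(w : (n.*2).-tuple bool | dyck w && P w) c = c *+ count P (dyck_words n).
Proof.
rewrite big_const_seq iter_addr_0 count_filter /words count_map.
by congr (_ *+ _); apply: eq_count => w; rewrite /= andbC.
Qed.

Definition last_return_words n : seq (seq bool) :=
  [seq glue uv.1 uv.2 | a <- iota 0 n.+1,
     uv <- [seq (u, v) | u <- dyck_words a, v <- dyck_words (n - a)]].

Lemma perm_last_return_words n : perm_eq (dyck_words n.+1) (last_return_words n).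
Proof.
have mem_pairs a u v :
    ((u, v) \in [seq (x, y) | x <- dyck_words a, y <- dyck_words (n - a)]) =
    [&& size u == a.*2, dyck u, size v == (n - a).*2 & dyck v].
  rewrite andbA -!mem_dyck_words.
  by apply/allpairsP/andP => [[[x y] [hx hy [-> ->]]]|[hu hv]]; [split|exists (u, v)].
apply: uniq_perm; first exact: uniq_dyck_words.
  apply: allpairs_uniq_dep => [|a _|]; first exact: iota_uniq.
    apply: allpairs_uniq; rewrite ?uniq_dyck_words //.
    by move=> [u v] [u' v'] _ _ [-> ->].
  move=> _ _ /allpairsPdep[a [[u v] [_ + ->]]] /allpairsPdep[a' [[u' v'] [_ + ->]]] /=.
  rewrite !mem_pairs => /and4P[/eqP su du _ dv] /and4P[/eqP su' du' _ dv'].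
  case/glue_inj => // eu ev; subst u' v'.
  by have -> : a = a' by apply: double_inj; rewrite -su -su'.
move=> w; rewrite mem_dyck_words; apply/andP/allpairsPdep => [[/eqP sw dw]|].
  have [|u [v [ew du dv]]] := dyck_last_return dw; first by rewrite -size_eq0 sw.
  have su := size_dyck du; have sv := size_dyck dv.
  exists (count id u), (u, v); rewrite mem_iota mem_pairs du dv su eqxx /=.
  by move: sw; rewrite ew /glue !size_cat /= size_cat /= su sv; split => //; lia.
move=> [a [[u v] [+ + ->]]]; rewrite mem_iota mem_pairs => ha /and4P[/eqP su du /eqP sv dv].
by split; [rewrite /glue !size_cat /= size_cat /= su sv; lia | exact: dyck_glue].
Qed.

Definition ntrailH_ge j n := count (fun w => j <= trailH w)%N (dyck_words n).

Lemma ntrailH_ge_0 j : ntrailH_ge j 0 = (j == 0%N).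
Proof.
rewrite /ntrailH_ge (permP (_ : perm_eq (dyck_words 0) [:: [::]])) /=.
  by rewrite /trailH leqn0 addn0.
by apply: uniq_perm => [||w]; rewrite ?uniq_dyck_words // mem_dyck_words inE; case: w.
Qed.

Lemma ntrailH_ge_succ j n :
  ntrailH_ge j.+1 n.+1 = (\sum_(0 <= a < n.+1) ntrailH_ge 0 a * ntrailH_ge j (n - a))%N.
Proof.
rewrite /ntrailH_ge (permP (perm_last_return_words n)) count_flatten -map_comp sumnE big_map.
rewrite /index_iota subn0; apply: eq_bigr => a _ /=.
rewrite count_map count_flatten -map_comp sumnE big_map.
rewrite (eq_bigr (fun=> ntrailH_ge j (n - a))) => [|u _]; last first.
  by rewrite /= count_map; apply: eq_count => v; rewrite /= trailH_glue.
by rewrite big_const_seq iter_addn_0 mulnC.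
Qed.

Lemma ntrailH_ge01 n : ntrailH_ge 0 n.+1 = ntrailH_ge 1 n.+1.
Proof.
apply: eq_in_count => w; rewrite mem_dyck_words => /andP[/eqP sw dw] /=.
have [|u [v [-> _ _]]] := dyck_last_return dw; first by rewrite -size_eq0 sw.
by rewrite trailH_glue.
Qed.

Lemma ntrailH_ge_split j n :
  ntrailH_ge j n = (count (fun w => trailH w == j) (dyck_words n) + ntrailH_ge j.+1 n)%N.
Proof.
rewrite /ntrailH_ge; elim: (dyck_words n) => //= w s ->.
by case: ltngtP => _ /=; lia.
Qed.

Lemma series_recl (V : zmodType) (u : V^nat) N :
  series u N.+1 = u 0%N + series (fun n => u n.+1) N.
Proof. by rewrite /series /= big_nat_recl. Qed.

Section Convolution.
Variable R : numFieldType.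
Implicit Types f h : R^nat.

Definition conv f h : R^nat := fun n => \sum_(0 <= i < n.+1) f i * h (n - i)%N.

Lemma conv_ge0 f h n : (forall k, 0 <= f k) -> (forall k, 0 <= h k) -> 0 <= conv f h n.
Proof. by move=> f0 h0; apply: sumr_ge0 => i _; apply: mulr_ge0. Qed.

Lemma le_series f m n : (forall k, 0 <= f k) -> (m <= n)%N -> series f m <= series f n.
Proof. by move=> f0; apply: (nondecreasing_series (fun k _ _ => f0 k)). Qed.

Lemma series_conv f h N :
  series (conv f h) N = \sum_(0 <= i < N) \sum_(0 <= b < N - i) f i * h b.
Proof.
elim: N => [|N IH]; first by rewrite /series /= !big_geq.
have inner i : (0 <= i < N)%N ->
    \sum_(0 <= b < N.+1 - i) f i * h b = \sum_(0 <= b < N - i) f i * h b + f i * h (N - i)%N.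
  by case/andP => _ lt_iN; rewrite subSn ?(ltnW lt_iN) // big_nat_recr.
rewrite seriesSr IH /conv big_nat_recr //= [RHS]big_nat_recr //= (eq_big_nat _ _ inner).
by rewrite big_split /= subnn subSnn big_nat1 addrA.
Qed.

Lemma series_conv_le f h N : (forall k, 0 <= f k) -> (forall k, 0 <= h k) ->
  series (conv f h) N <= series f N * series h N.
Proof.
move=> f0 h0; rewrite series_conv [series f N]/series /= mulr_suml.
apply: ler_sum_nat => i _; rewrite mulr_sumr.
by apply: (le_series (f := fun b => f i * h b)) => [b|]; rewrite ?mulr_ge0 ?leq_subr.
Qed.

Lemma series_conv_ge f h N : (forall k, 0 <= f k) -> (forall k, 0 <= h k) ->
  series f N * series h N <= series (conv f h) N.*2.
Proof.
move=> f0 h0; rewrite series_conv [series f N]/series /= mulr_suml.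
apply: (@le_trans _ _ (\sum_(0 <= i < N) \sum_(0 <= b < N.*2 - i) f i * h b)).
  apply: ler_sum_nat => i /andP[_ lt_iN]; rewrite mulr_sumr.
  by apply: (le_series (f := fun b => f i * h b)) => [b|]; rewrite ?mulr_ge0 //; lia.
apply: (le_series (f := fun i => \sum_(0 <= b < N.*2 - i) f i * h b)); last by lia.
by move=> i; apply: sumr_ge0 => b _; apply: mulr_ge0.
Qed.

End Convolution.

Section CauchyProduct.
Variable R : realType.
Implicit Types (u v f h : R^nat) (l lf lh : R).

Lemma nondecreasing_cvg_squeeze u v l :
  nondecreasing_seq u -> v @ \oo --> l ->
  (forall n, u n <= v n) -> (forall n, exists m, v n <= u m) -> u @ \oo --> l.
Proof.
move=> nd_u cvg_v le_uv le_vu.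
have lim_v : limn v = l := cvg_lim (@Rhausdorff R) cvg_v.
have u_le n : u n <= l.
  rewrite -lim_v; apply: limr_ge; first by apply/cvg_ex; exists l.
  near=> m; apply: le_trans (le_uv m); apply: nd_u; near: m; exact: nbhs_infty_ge.
have cvg_u : cvgn u by apply: nondecreasing_is_cvgn => //; exists l => _ [n _ <-].
suff -> : l = limn u by exact: cvg_u.
apply/eqP; rewrite eq_le; apply/andP; split; last by apply: limr_le => //; exact: nearW.
rewrite -lim_v; apply: limr_le; first by apply/cvg_ex; exists l.
apply: nearW => n; have [m /le_trans] := le_vu n; apply.
exact: nondecreasing_cvgn_le.
Unshelve. all: by end_near.
Qed.

Lemma cvg_series_conv f h lf lh :
  (forall k, 0 <= f k) -> (forall k, 0 <= h k) ->
  series f @ \oo --> lf -> series h @ \oo --> lh ->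
  series (conv f h) @ \oo --> lf * lh.
Proof.
move=> f0 h0 cvg_f cvg_h.
apply: (nondecreasing_cvg_squeeze (v := fun N => series f N * series h N)).
- by move=> m n; apply: le_series => k; apply: conv_ge0.
- exact: cvgM.
- by move=> N; apply: series_conv_le.
- by move=> N; exists N.*2; apply: series_conv_ge.
Qed.

End CauchyProduct.

Lemma catalan_eq_root (R : realFieldType) (p q L : R) :
  0 < q -> q < p -> p + q = 1 -> L = 1 + p * q * L ^+ 2 -> p * L <= 1 -> L = p^-1.
Proof.
move=> q_gt0 q_lt_p pq1 eqL pL_le1.
have : (p * L - 1) * (q * L - 1) = 0 by rewrite expr2 in eqL; nra.
move/eqP; rewrite mulf_eq0 !subr_eq0 => /orP[/eqP pL1|/eqP qL1].
  by rewrite -[p^-1]mulr1 -pL1 mulKf // gt_eqF // (lt_trans q_gt0).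
have L_gt0 : 0 < L by nra.
nra.
Qed.

Section TrailingRuns.
Variables (R : realType) (p q : R).
Hypotheses (q_gt0 : 0 < q) (q_lt_p : q < p) (pq1 : p + q = 1).

Let p_gt0 : 0 < p. Proof. exact: lt_trans q_lt_p. Qed.
Let p_neq0 : p != 0. Proof. by rewrite gt_eqF. Qed.

Definition trail_weight j : R^nat := fun n => (ntrailH_ge j n)%:R * (p * q) ^+ n.

Lemma trail_weight_ge0 j n : 0 <= trail_weight j n.
Proof. by rewrite mulr_ge0 // exprn_ge0 // mulr_ge0 // ltW. Qed.

Lemma trail_weight_succ j n :
  trail_weight j.+1 n.+1 = p * q * conv (trail_weight 0) (trail_weight j) n.
Proof.
rewrite /trail_weight ntrailH_ge_succ natr_sum mulr_suml /conv mulr_sumr.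
apply: eq_big_nat => i /andP[_ lt_in].
rewrite exprS natrM.
have -> : (p * q) ^+ n = (p * q) ^+ i * (p * q) ^+ (n - i) by rewrite -exprD subnKC.
ring.
Qed.

Lemma series_trail_weight0_succ N : series (trail_weight 0) N.+1 =
  1 + p * q * series (conv (trail_weight 0) (trail_weight 0)) N.
Proof.
rewrite series_recl [trail_weight 0 0]/trail_weight ntrailH_ge_0 /= mulr1 /series /= mulr_sumr.
by congr (_ + _); apply: eq_bigr => n _; rewrite -trail_weight_succ /trail_weight ntrailH_ge01.
Qed.

Lemma series_trail_weight_succ j N : series (trail_weight j.+1) N.+1 =
  p * q * series (conv (trail_weight 0) (trail_weight j)) N.
Proof.
rewrite series_recl [trail_weight _ 0]/trail_weight ntrailH_ge_0 /= mul0r add0r /series /= mulr_sumr.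
by apply: eq_bigr => n _; rewrite trail_weight_succ.
Qed.

Lemma series_trail_weight0_le N : p * series (trail_weight 0) N <= 1.
Proof.
elim: N => [|N IH]; first by rewrite /series /= big_geq // mulr0 ler01.
rewrite series_trail_weight0_succ.
have := series_conv_le N (trail_weight_ge0 0) (trail_weight_ge0 0).
set t := series (trail_weight 0) N in IH *.
set s := series (conv _ _) N => s_le.
have t_ge0 : 0 <= t by apply: sumr_ge0 => n _; apply: trail_weight_ge0.
have sq_le1 : (p * t) ^+ 2 <= 1 by rewrite expr_le1 // mulr_ge0 // ltW.
(* p (1 + pq s) = p + q (p^2 s) <= p + q (p t)^2 <= p + q = 1 *)
rewrite mulrDr mulr1 -[leRHS]pq1 lerD2l (_ : p * _ = q * (p ^+ 2 * s)); last by ring.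
apply: ler_piMr; first exact: ltW.
apply: le_trans sq_le1; rewrite exprMn expr2 [t ^+ 2]expr2.
by apply: ler_wpM2l; rewrite // mulr_ge0 // ltW.
Qed.

Lemma cvg_series_trail_weight0 : series (trail_weight 0) @ \oo --> p^-1.
Proof.
have le_inv N : series (trail_weight 0) N <= p^-1.
  by rewrite -(ler_pM2l p_gt0) mulfV ?series_trail_weight0_le.
have cvg0 : cvgn (series (trail_weight 0)).
  apply: nondecreasing_is_cvgn; last by exists p^-1 => _ [N _ <-].
  by move=> m n; apply: le_series => k; apply: trail_weight_ge0.
set L := limn _ in cvg0.
suff <- : L = p^-1 by [].
apply: catalan_eq_root q_gt0 q_lt_p pq1 _ _; last first.
  rewrite -(mulfV p_neq0); apply: ler_wpM2l; first exact: ltW.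
  by apply: limr_le => //; exact: nearW.
apply: (cvg_lim (@Rhausdorff R)); rewrite -cvg_shiftS.
have -> : [sequence series (trail_weight 0) n.+1]_n =
    fun N => 1 + p * q * series (conv (trail_weight 0) (trail_weight 0)) N.
  by apply/funext => N; apply: series_trail_weight0_succ.
apply: cvgD; first exact: cvg_cst.
rewrite expr2; apply: cvgM; first exact: cvg_cst.
exact: (cvg_series_conv (trail_weight_ge0 0) (trail_weight_ge0 0) cvg0 cvg0).
Qed.

Lemma cvg_series_trail_weight j : series (trail_weight j) @ \oo --> q ^+ j / p.
Proof.
elim: j => [|j IH]; first by rewrite expr0 div1r; exact: cvg_series_trail_weight0.
have -> : q ^+ j.+1 / p = p * q * (p^-1 * (q ^+ j / p)).
  by rewrite exprS; field.
rewrite -cvg_shiftS.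
have -> : [sequence series (trail_weight j.+1) n.+1]_n =
    fun N => p * q * series (conv (trail_weight 0) (trail_weight j)) N.
  by apply/funext => N; apply: series_trail_weight_succ.
apply: cvgM; first exact: cvg_cst.
exact: cvg_series_conv (trail_weight_ge0 0) (trail_weight_ge0 j) cvg_series_trail_weight0 IH.
Qed.

Lemma cyc_mass_all n : cyc_mass p q (fun _ => true) n = q ^+ 2 * p * trail_weight 0 n.
Proof.
rewrite /cyc_mass (sum_dyck_tuples (fun _ => true)) /trail_weight.
by change (count _ (dyck_words n)) with (ntrailH_ge 0 n); ring.
Qed.

Lemma cyc_mass_trailH k n : cyc_mass p q (fun c => trailH c == k.+1) n =
  q ^+ 2 * p * (trail_weight k n - trail_weight k.+1 n).
Proof.
rewrite /cyc_mass (sum_dyck_tuples (fun w => trailH (cycle_SS w) == k.+1)).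
rewrite (eq_count (a2 := fun w => trailH w == k)); last first.
  by move=> w; rewrite /= (trailH_glue [:: true] w).
rewrite /trail_weight (ntrailH_ge_split k n) natrD -mulr_natr; ring.
Qed.

Lemma prob_SS_all : prob_SS p q (fun _ => true) = q ^+ 2.
Proof.
rewrite /prob_SS (_ : series _ = fun N => q ^+ 2 * p * series (trail_weight 0) N); last first.
  by apply/funext => N; rewrite /series /= mulr_sumr; apply: eq_bigr => n _; apply: cyc_mass_all.
apply: cvg_lim; first exact: Rhausdorff.
rewrite [X in _ --> X](_ : _ = q ^+ 2 * p * p^-1); last by rewrite mulfK.
by apply: cvgM; [exact: cvg_cst | exact: cvg_series_trail_weight0].
Qed.

Lemma prob_SS_trailH k : prob_SS p q (fun c => trailH c == k.+1) = p * q ^+ k.+2.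
Proof.
rewrite /prob_SS (_ : series _ = fun N =>
    q ^+ 2 * p * (series (trail_weight k) N - series (trail_weight k.+1) N)); last first.
  apply/funext => N; rewrite /series /= -sumrB mulr_sumr.
  by apply: eq_bigr => n _; apply: cyc_mass_trailH.
apply: cvg_lim; first exact: Rhausdorff.
rewrite [X in _ --> X](_ : _ = q ^+ 2 * p * (q ^+ k / p - q ^+ k.+1 / p)); last first.
  have -> : q ^+ k / p - q ^+ k.+1 / p = (1 - q) * q ^+ k / p by rewrite exprS; field.
  by rewrite -pq1 addrK -addn2 exprD; field.
apply: cvgM; first exact: cvg_cst.
by apply: cvgB; apply: cvg_series_trail_weight.
Qed.

End TrailingRuns.

Theorem lemma3 (R : realType) (p q : R) (k : nat) :
  0 < q -> q < p -> p + q = 1 -> (1 <= k)%N ->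
  prob_SS p q (fun c => trailH c == k) / prob_SS p q (fun _ => true)
  = p * q ^+ k.-1.
Proof.
move=> q_gt0 q_lt_p pq1; case: k => [//|k] _ /=.
rewrite prob_SS_trailH // prob_SS_all // -addn2 exprD mulrA mulfK //.
by rewrite expf_neq0 // gt_eqF.
Qed.
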